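(* Let $R$ be an axis-parallel rectangle of height $h$, $\rho>0$, and $t=\lceil h/(\sqrt3\rho)\rceil$. For every vertical line $\lambda$ there is a set of $2t$ points such that for every axis-parallel line segment $\ell\subset R$ whose hippodrome $H(\ell,\rho)$ intersects $\lambda$, at least one of these points lies in $H(\ell,\rho)$.
   Context: The hippodrome $H(\ell,\rho)$ of a segment $\ell$ is the set of points of the plane at Euclidean distance at most $\rho$ from some point of $\ell$. *)

From Stdlib Require Import Reals List.
Open Scope R_scope.

Definition point := (R * R)%type.

Definition edist (p q : point) : R :=
  sqrt ((fst p - fst q)^2 + (snd p - snd q)^2).

Definition on_segment (a b z : point) : Prop :=
  exists s : R, 0 <= s <= 1 /\
    z = ((1 - s) * fst a + s * fst b, (1 - s) * snd a + s * snd b).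

Definition in_hippodrome (a b : point) (rho : R) (z : point) : Prop :=
  exists w : point, on_segment a b w /\ edist z w <= rho.

Definition axis_parallel (a b : point) : Prop :=
  fst a = fst b \/ snd a = snd b.

Definition in_rect (x1 x2 y1 y2 : R) (z : point) : Prop :=
  x1 <= fst z <= x2 /\ y1 <= snd z <= y2.

Definition seg_in_rect (x1 x2 y1 y2 : R) (a b : point) : Prop :=
  forall z, on_segment a b z -> in_rect x1 x2 y1 y2 z.

From Stdlib Require Import Reals List Lra Lia Psatz.
Open Scope R_scope.

(* Cut the strip [y1, y1 + n d] into n cells of height d <= sqrt 3 rho and place
   two points per cell, at mid-height and at abscissae c -/+ rho/2.  A point w at
   horizontal distance at most rho from the line x = c is then at horizontal
   distance at most rho/2 from one of the two columns and at vertical distance at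
   most d/2 from the centre of its cell, hence at squared distance at most
   rho^2/4 + 3 rho^2/4 = rho^2 from a chosen point.  If H(l, rho) meets the
   line, some point w of l is such a point, and the chosen point lies in
   H(l, rho). *)

Definition cell_center (y1 d : R) (i : nat) : R := y1 + (INR i + / 2) * d.

Fixpoint column_pair_points (c rho y1 d : R) (n : nat) : list point :=
  match n with
  | O => nil
  | S i => (c - rho / 2, cell_center y1 d i) :: (c + rho / 2, cell_center y1 d i)
             :: column_pair_points c rho y1 d i
  end.

Lemma length_column_pair_points c rho y1 d n :
  length (column_pair_points c rho y1 d n) = (2 * n)%nat.
Proof. induction n as [|n IH]; simpl; [reflexivity|]. rewrite IH. lia. Qed.

Lemma in_column_pair_points c rho y1 d n i s :
  (i < n)%nat -> s = c - rho / 2 \/ s = c + rho / 2 ->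
  In (s, cell_center y1 d i) (column_pair_points c rho y1 d n).
Proof.
  induction n as [|n IH]; intros Hi Hs; [lia|]. simpl.
  destruct (Nat.eq_dec i n) as [->|Hne].
  - destruct Hs as [-> | ->]; auto.
  - right; right. apply IH; [lia|exact Hs].
Qed.

Lemma exists_near_cell_center (y1 d y : R) (n : nat) :
  0 < d -> (1 <= n)%nat -> y1 <= y <= y1 + INR n * d ->
  exists i, (i < n)%nat /\ Rabs (y - cell_center y1 d i) <= d / 2.
Proof.
  unfold cell_center. intros Hd.
  induction n as [|n IH]; intros Hn Hy; [lia|].
  destruct (Nat.eq_dec n 0) as [->|Hn0].
  - exists 0%nat. split; [lia|]. simpl in *. apply Rabs_le. lra.
  - destruct (Rle_dec y (y1 + INR n * d)) as [Hle|Hgt].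
    + destruct IH as [i [Hi Hyi]]; [lia|lra|]. exists i. split; [lia|exact Hyi].
    + exists n. split; [lia|]. rewrite S_INR in Hy. apply Rabs_le. lra.
Qed.

Lemma edist_le_sq (p q : point) (rho : R) :
  0 <= rho -> (fst p - fst q) ^ 2 + (snd p - snd q) ^ 2 <= rho ^ 2 -> edist p q <= rho.
Proof.
  intros Hr H. unfold edist. rewrite <- (sqrt_pow2 rho Hr). apply sqrt_le_1_alt, H.
Qed.

Lemma sq_fst_le_edist (p q : point) (rho : R) :
  edist p q <= rho -> (fst p - fst q) ^ 2 <= rho ^ 2.
Proof.
  unfold edist. intros H.
  pose proof (pow2_ge_0 (fst p - fst q)). pose proof (pow2_ge_0 (snd p - snd q)).
  pose proof (sqrt_sqrt ((fst p - fst q) ^ 2 + (snd p - snd q) ^ 2) ltac:(lra)).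
  pose proof (sqrt_pos ((fst p - fst q) ^ 2 + (snd p - snd q) ^ 2)).
  nra.
Qed.

Lemma column_pair_points_cover (c rho y1 d : R) (n : nat) (w : point) :
  0 < rho -> 0 < d -> d <= sqrt 3 * rho -> (1 <= n)%nat ->
  (fst w - c) ^ 2 <= rho ^ 2 -> y1 <= snd w <= y1 + INR n * d ->
  exists p, In p (column_pair_points c rho y1 d n) /\ edist p w <= rho.
Proof.
  intros Hr Hd Hdr Hn Hwx Hwy.
  destruct (exists_near_cell_center y1 d (snd w) n Hd Hn Hwy) as [i [Hi Hyi]].
  set (s := if Rle_dec c (fst w) then c + rho / 2 else c - rho / 2).
  assert (Hs : (s - fst w) ^ 2 <= rho ^ 2 / 4).
  { unfold s. destruct (Rle_dec c (fst w)); nra. }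
  assert (Hy : (cell_center y1 d i - snd w) ^ 2 <= 3 * rho ^ 2 / 4).
  { rewrite <- Rsqr_pow2, Rsqr_neg_minus, Rsqr_pow2, <- (pow2_abs (snd w - _)).
    pose proof (Rabs_pos (snd w - cell_center y1 d i)).
    pose proof (sqrt_sqrt 3 ltac:(lra)). pose proof (sqrt_pos 3). nra. }
  exists (s, cell_center y1 d i). split.
  - apply in_column_pair_points; [exact Hi|]. unfold s. destruct (Rle_dec c (fst w)); auto.
  - apply edist_le_sq; simpl; lra.
Qed.

Lemma ceil_cell_height (h rho : R) (t : nat) :
  0 < h -> 0 < rho -> INR t - 1 < h / (sqrt 3 * rho) <= INR t ->
  (1 <= t)%nat /\ h / INR t <= sqrt 3 * rho.
Proof.
  intros Hh Hr [_ Ht].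
  assert (Hk : 0 < sqrt 3 * rho) by (pose proof (sqrt_lt_R0 3 ltac:(lra)); nra).
  assert (Hq : 0 < h / (sqrt 3 * rho)) by (apply Rdiv_lt_0_compat; lra).
  assert (Htpos : (1 <= t)%nat) by (destruct t; [simpl in Ht; lra | lia]).
  pose proof (lt_0_INR t ltac:(lia)) as HtR.
  split; [exact Htpos|].
  apply Rmult_le_compat_r with (r := sqrt 3 * rho) in Ht; [|lra].
  unfold Rdiv in Ht. rewrite Rmult_assoc, Rinv_l, Rmult_1_r in Ht by lra.
  apply Rmult_le_reg_r with (INR t); [exact HtR|].
  replace (h / INR t * INR t) with h by (field; lra). lra.
Qed.

Theorem lemma4 (x1 x2 y1 y2 rho : R) (t : nat) (c : R) :
  x1 <= x2 -> y1 < y2 -> 0 < rho ->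
  INR t - 1 < (y2 - y1) / (sqrt 3 * rho) <= INR t ->
  exists P : list point,
    length P = (2 * t)%nat /\
    forall a b : point,
      axis_parallel a b ->
      seg_in_rect x1 x2 y1 y2 a b ->
      (exists z : point, fst z = c /\ in_hippodrome a b rho z) ->
      exists p, In p P /\ in_hippodrome a b rho p.
Proof.
  intros _ Hy Hr Hceil.
  destruct (ceil_cell_height (y2 - y1) rho t ltac:(lra) Hr Hceil) as [Ht Hd].
  pose proof (lt_0_INR t ltac:(lia)) as HtR.
  set (d := (y2 - y1) / INR t) in Hd.
  assert (Hdpos : 0 < d) by (apply Rdiv_lt_0_compat; lra).
  assert (Hstrip : y1 + INR t * d = y2) by (unfold d; field; lra).
  exists (column_pair_points c rho y1 d t).
  split; [apply length_column_pair_points|].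
  intros a b _ Hin [z [Hzc [w [Hw Hzw]]]].
  destruct (Hin w Hw) as [_ Hwy].
  apply sq_fst_le_edist in Hzw. rewrite Hzc in Hzw.
  destruct (column_pair_points_cover c rho y1 d t w Hr Hdpos Hd Ht)
    as [p [Hp Hpw]]; [nra | lra |].
  exists p. split; [exact Hp|]. exists w. split; assumption.
Qed.
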